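(* Let $f(X)=N(N-1)\sum_{i=1}^{\ell}\beta_i\,t(H_i,X)$ be a subgraph-counting function and let $m_i=|E(H_i)|$. Then for all $X,Y\in[0,1]^n$, $$\|\nabla f(X)-\nabla f(Y)\|_1\le\sum_{i=1}^{\ell}|\beta_i|\,m_i(m_i-1)\,\|X-Y\|_1.$$
   Context: $n=\binom N2$; $X\in[0,1]^n$ is identified with a symmetric $N\times N$ matrix with zero diagonal, entries indexed by unordered pairs. For a finite simple graph $H$ on $[m]$, $t(H,X)=\frac{1}{N(N-1)\cdots(N-m+1)}\sum_q\prod_{\{l,l'\}\in E(H)}X_{q_lq_{l'}}$ over injective $q:[m]\to[N]$. For an index $e$, $\partial_ef(X)=\frac12(f(X^{e\leftarrow1})-f(X^{e\leftarrow0}))$, $\nabla f(X)=(\partial_ef(X))_e\in\mathbb R^n$. $\|\cdot\|_1$ is the $\ell^1$ norm on $\mathbb R^n$. *)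

From HB Require Import structures.
From mathcomp Require Import all_boot all_order all_algebra.
Set Implicit Arguments. Unset Strict Implicit. Unset Printing Implicit Defensive.
Import Order.TTheory GRing.Theory Num.Theory.
Local Open Scope ring_scope.

(* A finite simple graph on the vertex set [m] = 'I_m: its edge set is a set of
   2-element subsets of 'I_m (no loops, no multiple edges). *)
Record sgraph := SGraph {
  gv : nat;
  gE : {set {set 'I_gv}};
  gE2 : forall e, e \in gE -> #|e| = 2%N }.

Definition nedges (H : sgraph) : nat := #|gE H|.

(* index set of [0,1]^n, n = binom N 2: unordered pairs {a,b} of distinct a b in [N] *)
Definition upair (N : nat) := {e : {set 'I_N} | #|e| == 2%N}.

Definition vec (R : Type) (N : nat) := {ffun upair N -> R}.

(* entry X_{s} for a set s of vertices: X_e if s is an unordered pair e, else 0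
   (in particular the diagonal X_{aa} = X_{{a}} is 0) *)
Definition Xent (R : ringType) (N : nat) (X : vec R N) (s : {set 'I_N}) : R :=
  if @insub _ _ (upair N) s is Some e then X e else 0.

Definition tdens (R : fieldType) (N : nat) (H : sgraph) (X : vec R N) : R :=
  (\sum_(q : {ffun 'I_(gv H) -> 'I_N} | injectiveb q)
      \prod_(e in gE H) Xent X (q @: e)) / (N ^_ (gv H))%:R.

Definition fcount (R : fieldType) (N l : nat) (beta : 'I_l -> R)
  (H : 'I_l -> sgraph) (X : vec R N) : R :=
  (N * (N - 1))%:R * \sum_(i < l) beta i * tdens (H i) X.

Definition upd (R : Type) (N : nat) (X : vec R N) (e : upair N) (c : R) : vec R N :=
  [ffun e' => if e' == e then c else X e'].

Definition dpart (R : fieldType) (N : nat) (f : vec R N -> R) (e : upair N)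
  (X : vec R N) : R := (f (upd X e 1) - f (upd X e 0)) / 2%:R.

Definition grad (R : fieldType) (N : nat) (f : vec R N -> R) (X : vec R N)
  : vec R N := [ffun e => dpart f e X].

Definition norm1 (R : numDomainType) (N : nat) (v : vec R N) : R :=
  \sum_(e : upair N) `|v e|.

Definition in_cube (R : numDomainType) (N : nat) (X : vec R N) : Prop :=
  forall e, 0 <= X e <= 1.

From HB Require Import structures.
From mathcomp Require Import all_boot all_order all_algebra perm.
From mathcomp Require Import ring.
Import Order.TTheory GRing.Theory Num.Theory.
Local Open Scope ring_scope.

(* Expanding t(H, X) over injections q : V(H) -> [N] writes it as an average
   of monomials prod_{h in E(H)} X_{q(h)}.  As q is injective, at most one edge
   h is mapped onto a given coordinate e, and the discrete partial derivative of
   the monomial in e is then half the product of the other m - 1 factors, where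
   m = |E(H)| (and 0 if there is no such h).  All entries lie in [0, 1], so two
   such products differ by at most the sum of the differences of their factors.
   Summing over e and q, each ordered pair (h, h') of distinct edges contributes
   sum_q |X_{q(h')} - Y_{q(h')}|; the symmetric group of [N] acts transitively
   on 2-subsets and commutes with post-composition, so every 2-subset is the
   image of h' under the same number of injections, and this sum is
   N^_v / C(N, 2) * ||X - Y||_1 with v = |V(H)|.  Since N (N - 1) = 2 C(N, 2),
   the normalisations cancel and leave the factor m (m - 1). *)

Lemma norm_prod_sub_le (R : numDomainType) (I : Type) (r : seq I) (P : pred I)
    (F G : I -> R) :
  (forall i, P i -> 0 <= F i <= 1) -> (forall i, P i -> 0 <= G i <= 1) ->
  `|\prod_(i <- r | P i) F i - \prod_(i <- r | P i) G i|
    <= \sum_(i <- r | P i) `|F i - G i|.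
Proof.
move=> F01 G01; elim: r => [|a r IHr]; first by rewrite !big_nil subrr normr0.
rewrite !big_cons; case: ifP => // Pa.
set A := \prod_(i <- r | P i) F i; set B := \prod_(i <- r | P i) G i.
have normA : `|A| <= 1.
  by rewrite ger0_norm ?prodr_ile1 ?prodr_ge0 // => i /F01/andP[].
have normGa : `|G a| <= 1 by case/andP: (G01 a Pa) => Ga0 Ga1; rewrite ger0_norm.
have -> : F a * A - G a * B = (F a - G a) * A + G a * (A - B) by ring.
apply: le_trans (ler_normD _ _) _; rewrite !normrM lerD //.
  by rewrite -[leRHS]mulr1 ler_wpM2l.
apply: le_trans IHr; rewrite -[leRHS]mul1r ler_wpM2r //.
Qed.

Lemma card_two_sets_perm {T : finType} {s t : {set T}} :
  #|s| = 2 -> #|t| = 2 -> exists sigma : {perm T}, sigma @: s = t.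
Proof.
move=> /eqP/cards2P[a [b [ab ->]]] /eqP/cards2P[c [d [cd ->]]].
pose b' := tperm a c b.
have b'c : b' != c by rewrite -(tpermL a c) (inj_eq perm_inj) eq_sym.
exists (tperm a c * tperm b' d)%g.
by rewrite imsetU1 imset_set1 !permM tpermL -/b' tpermL tpermD // eq_sym.
Qed.

Section InjectiveImages.
Set Implicit Arguments.
Variables (aT rT : finType) (h : {set aT}).
Hypothesis h2 : #|h| = 2%N.

Definition inj_image_count (s : {set rT}) : nat :=
  #|[set q : {ffun aT -> rT} | injectiveb q & q @: h == s]|.

Lemma inj_image_count_eq0 (s : {set rT}) : #|s| != 2%N -> inj_image_count s = 0%N.
Proof.
move=> s2; apply: eq_card0 => q; rewrite !inE.
apply/andP => -[/injectiveP q_inj /eqP qs].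
by rewrite -qs card_imset // h2 in s2.
Qed.

Lemma inj_image_count_perm_le (sigma : {perm rT}) (s : {set rT}) :
  (inj_image_count s <= inj_image_count (sigma @: s))%N.
Proof.
pose comp_sigma (q : {ffun aT -> rT}) := [ffun x => sigma (q x)].
have comp_inj : injective comp_sigma.
  move=> q1 q2 /ffunP eq12; apply/ffunP => x.
  by apply: (@perm_inj _ sigma); have := eq12 x; rewrite !ffunE.
rewrite /inj_image_count -(card_imset _ comp_inj); apply/subset_leq_card/subsetP.
move=> _ /imsetP[q + ->]; rewrite !inE => /andP[/injectiveP q_inj /eqP <-].
apply/andP; split.
  by apply/injectiveP => x y; rewrite !ffunE => /perm_inj/q_inj.
by rewrite -imset_comp; apply/eqP/eq_imset => x; rewrite ffunE.
Qed.

Lemma inj_image_count_const (s t : {set rT}) :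
  #|s| = 2%N -> #|t| = 2%N -> inj_image_count s = inj_image_count t.
Proof.
have count_le (u v : {set rT}) : #|u| = 2%N -> #|v| = 2%N ->
    (inj_image_count u <= inj_image_count v)%N.
  move=> u2 v2; have [sigma <-] := card_two_sets_perm u2 v2.
  exact: inj_image_count_perm_le.
by move=> s2 t2; apply/eqP; rewrite eqn_leq !count_le.
Qed.

Lemma sum_inj_imset (R : ringType) (g : {set rT} -> R) :
  \sum_(q : {ffun aT -> rT} | injectiveb q) g (q @: h)
    = \sum_(s : {set rT} | #|s| == 2%N) (inj_image_count s)%:R * g s.
Proof.
rewrite (partition_big (fun q : {ffun aT -> rT} => q @: h) predT) //=.
rewrite (eq_bigr (fun s => (inj_image_count s)%:R * g s)) => [|s _]; last first.
  rewrite (eq_bigr (fun=> g s)) => [|q /andP[_ /eqP ->] //].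
  by rewrite sumr_const /inj_image_count cardsE mulr_natl.
rewrite (bigID (fun s : {set rT} => #|s| == 2%N)) /= [X in _ + X]big1 ?addr0 // => s s2.
by rewrite inj_image_count_eq0 ?mul0r.
Qed.

Lemma sum_inj_imset_uniform (R : comRingType) (g : {set rT} -> R) :
  'C(#|rT|, 2)%:R * \sum_(q : {ffun aT -> rT} | injectiveb q) g (q @: h)
    = (#|rT| ^_ #|aT|)%:R * \sum_(s : {set rT} | #|s| == 2%N) g s.
Proof.
have total : (#|rT| ^_ #|aT|)%:R
    = \sum_(t : {set rT} | #|t| == 2%N) (inj_image_count t)%:R :> R.
  rewrite -card_inj_ffuns cardsE -sum1_card natr_sum.
  by rewrite (@sum_inj_imset R (fun=> 1)); apply: eq_bigr => t _; rewrite mulr1.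
rewrite sum_inj_imset total -card_draws cardsE -sum1_card natr_sum !big_distrl /=.
apply: eq_bigr => t /eqP t2; rewrite mul1r big_distrr /=; apply: eq_bigr => s /eqP s2.
by rewrite (inj_image_count_const s2 t2).
Qed.

End InjectiveImages.

Lemma sum_upair {R : nmodType} {N : nat} (g : {set 'I_N} -> R) :
  \sum_(e : upair N) g (val e) = \sum_(s : {set 'I_N} | #|s| == 2%N) g s.
Proof.
symmetry; rewrite (reindex_omap (val : upair N -> _) insub) => [|s s2].
  by apply: eq_bigl => -[s s2] /=; rewrite s2 insubT /= eqxx.
by rewrite insubT.
Qed.

Lemma sum_upair_eq_le {R : numDomainType} {N : nat} (s : {set 'I_N}) (x : R) :
  0 <= x -> \sum_(e : upair N | s == val e) x <= x.
Proof.
move=> x_ge0; case: (pickP (fun e : upair N => s == val e)) => [e0 /eqP s_e0|none].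
  rewrite (bigD1 e0) /= ?s_e0 // big1 ?addr0 // => e /andP[/eqP e_e0 ne].
  by rewrite (val_inj e_e0) eqxx in ne.
by rewrite big_pred0.
Qed.

Lemma Xent_val {R : ringType} {N : nat} (X : vec R N) (e : upair N) :
  Xent X (val e) = X e.
Proof. by rewrite /Xent valK. Qed.

Lemma Xent_upd {R : ringType} {N : nat} (X : vec R N) (e : upair N) (c : R) s :
  Xent (upd X e c) s = if s == val e then c else Xent X s.
Proof.
rewrite /Xent; case: insubP => [u _ <-|s_not2]; first by rewrite ffunE (inj_eq val_inj).
by case: eqP => // s_e; case: s_not2; rewrite s_e (valP e).
Qed.

Lemma Xent_cube {R : numDomainType} {N : nat} (X : vec R N) s :
  in_cube X -> 0 <= Xent X s <= 1.
Proof.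
by rewrite /Xent => X01; case: insubP => [u _ _|_]; [exact: X01 | rewrite lexx ler01].
Qed.

Lemma norm1_grad_sub_lincomb_le {R : numFieldType} {N : nat} {I : finType}
    {P : pred I} {c : I -> R} {g : I -> vec R N -> R} {f : vec R N -> R}
    (X Y : vec R N) :
  (forall Z, f Z = \sum_(i | P i) c i * g i Z) ->
  norm1 (grad f X - grad f Y)
    <= \sum_(i | P i) `|c i| * norm1 (grad (g i) X - grad (g i) Y).
Proof.
move=> fE.
have gradE e : (grad f X - grad f Y) e
    = \sum_(i | P i) c i * (grad (g i) X - grad (g i) Y) e.
  rewrite !ffunE /dpart !fE -!sumrB !mulr_suml -sumrB.
  by apply: eq_bigr => i _; rewrite !ffunE /dpart; ring.
rewrite /norm1 (eq_bigr _ (fun e _ => congr1 Num.norm (gradE e))).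
apply: le_trans (ler_sum _ (fun e _ => ler_norm_sum _ _ _)) _.
rewrite exchange_big /=; apply: ler_sum => i _.
by rewrite big_distrr; apply: ler_sum => e _; rewrite normrM.
Qed.

Definition monomial {R : ringType} {N : nat} {I : finType} (E : {set I})
    (s : I -> {set 'I_N}) (Z : vec R N) : R :=
  \prod_(i in E) Xent Z (s i).

Section Monomial.
Variables (R : numFieldType) (N : nat) (I : finType) (E : {set I}).
Variable s : I -> {set 'I_N}.
Hypothesis s_inj : {in E &, injective s}.

Lemma dpart_monomial (e : upair N) (Z : vec R N) :
  dpart (monomial E s) e Z
    = 2%:R^-1 * \sum_(i in E | s i == val e) \prod_(j in E | j != i) Xent Z (s j).
Proof.
have updE c : monomial E s (upd Z e c)
    = \prod_(i in E) (if s i == val e then c else Xent Z (s i)).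
  by apply: eq_bigr => i _; rewrite Xent_upd.
rewrite /dpart !updE.
case: (pickP (fun i => (i \in E) && (s i == val e))) => [i0 /andP[i0E /eqP si0]|none].
  have only_i0 i : (i \in E) && (s i == val e) = (i == i0).
    apply/andP/eqP => [[iE /eqP si]|->]; last by rewrite i0E si0.
    by apply: s_inj; rewrite ?si ?si0.
  have others c : \prod_(i in E | i != i0) (if s i == val e then c else Xent Z (s i))
      = \prod_(i in E | i != i0) Xent Z (s i).
    apply: eq_bigr => i /andP[iE ne].
    by have := only_i0 i; rewrite iE (negbTE ne) /= => ->.
  rewrite (big_pred1 i0 only_i0) !(bigD1 i0 i0E) /= si0 eqxx !others.
  by rewrite mul1r mul0r subr0 mulrC.
have unaffected c : \prod_(i in E) (if s i == val e then c else Xent Z (s i))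
    = \prod_(i in E) Xent Z (s i).
  by apply: eq_bigr => i iE; have := none i; rewrite iE /= => ->.
by rewrite !unaffected subrr mul0r big_pred0 ?mulr0.
Qed.

Lemma norm1_grad_monomial_sub_le (X Y : vec R N) : in_cube X -> in_cube Y ->
  norm1 (grad (monomial E s) X - grad (monomial E s) Y)
    <= 2%:R^-1 * \sum_(i in E) \sum_(j in E | j != i) `|Xent X (s j) - Xent Y (s j)|.
Proof.
move=> X01 Y01; set D := fun i => \sum_(j in E | j != i) `|Xent X (s j) - Xent Y (s j)|.
have D_ge0 i : 0 <= D i by apply: sumr_ge0 => j _; apply: normr_ge0.
have half_ge0 : 0 <= 2%:R^-1 :> R by rewrite invr_ge0 ler0n.
have entry_le e : `|(grad (monomial E s) X - grad (monomial E s) Y) e|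
    <= 2%:R^-1 * \sum_(i in E | s i == val e) D i.
  rewrite !ffunE !dpart_monomial -mulrBr -sumrB normrM ger0_norm // ler_wpM2l //.
  apply: le_trans (ler_norm_sum _ _ _) _; apply: ler_sum => i _.
  by apply: norm_prod_sub_le => j _; apply: Xent_cube.
apply: le_trans (ler_sum _ (fun e _ => entry_le e)) _.
rewrite -mulr_sumr ler_wpM2l //.
rewrite (exchange_big_dep (fun i => i \in E)) => [|e i _ /andP[]//].
apply: ler_sum => i iE; rewrite (eq_bigl (fun e => s i == val e)) => [|e].
  exact: sum_upair_eq_le.
by rewrite iE.
Qed.

End Monomial.

Lemma sum_distinct_pairs_const (R : nmodType) (T : finType) (E : {set T}) (c : R) :
  \sum_(i in E) \sum_(j in E | j != i) c = c *+ (#|E| * (#|E| - 1)).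
Proof.
rewrite (eq_bigr (fun=> c *+ (#|E| - 1))) => [|i iE].
  by rewrite sumr_const -mulrnA mulnC.
rewrite (eq_bigl (mem (E :\ i))) => [|j]; last by rewrite !inE andbC.
by rewrite sumr_const (cardsD1 i E) iE add1n subn1.
Qed.

Lemma tdens_expand {R : fieldType} {N : nat} (H : sgraph) (Z : vec R N) :
  tdens H Z = \sum_(q : {ffun 'I_(gv H) -> 'I_N} | injectiveb q)
                (N ^_ gv H)%:R^-1 * monomial (gE H) (fun h => q @: h) Z.
Proof. by rewrite /tdens mulrC big_distrr. Qed.

Lemma sum_inj_Xent_dist {R : numFieldType} {N : nat} (H : sgraph) (X Y : vec R N) h :
  h \in gE H ->
  'C(N, 2)%:R * \sum_(q : {ffun 'I_(gv H) -> 'I_N} | injectiveb q)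
                  `|Xent X (q @: h) - Xent Y (q @: h)|
    = (N ^_ gv H)%:R * norm1 (X - Y).
Proof.
move=> hE; have := sum_inj_imset_uniform (gE2 hE) R (fun s => `|Xent X s - Xent Y s|).
rewrite !card_ord => ->; rewrite -sum_upair.
by congr (_ * _); apply: eq_bigr => e _; rewrite !Xent_val !ffunE.
Qed.

Lemma norm1_grad_tdens_sub_le {R : realFieldType} {N : nat} (H : sgraph)
    (X Y : vec R N) :
  in_cube X -> in_cube Y ->
  norm1 (grad (tdens H) X - grad (tdens H) Y)
    <= \sum_(q : {ffun 'I_(gv H) -> 'I_N} | injectiveb q) (N ^_ gv H)%:R^-1 *
         (2%:R^-1 * \sum_(h in gE H) \sum_(h' in gE H | h' != h)
                      `|Xent X (q @: h') - Xent Y (q @: h')|).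
Proof.
move=> X01 Y01; apply: le_trans (norm1_grad_sub_lincomb_le X Y (tdens_expand H)) _.
apply: ler_sum => q /injectiveP q_inj.
rewrite ger0_norm ?invr_ge0 // ler_wpM2l ?invr_ge0 //.
by apply: norm1_grad_monomial_sub_le => // h1 h2 _ _; apply: imset_inj.
Qed.

Lemma tdens_grad_lipschitz {R : realFieldType} {N : nat} (H : sgraph)
    (X Y : vec R N) :
  in_cube X -> in_cube Y ->
  (N * (N - 1))%:R * norm1 (grad (tdens H) X - grad (tdens H) Y)
    <= (nedges H * (nedges H - 1))%:R * norm1 (X - Y).
Proof.
move=> X01 Y01; pose P : R := (N ^_ gv H)%:R.
rewrite (le_trans (ler_wpM2l _ (norm1_grad_tdens_sub_le H X01 Y01))) ?ler0n //.
have -> : (N * (N - 1))%:R = 2%:R * 'C(N, 2)%:R :> R.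
  by rewrite -natrM -(mul_bin_diag N 1) bin1 subn1.
rewrite -big_distrr -big_distrr /= exchange_big /=.
under eq_bigr do rewrite exchange_big /=.
have -> (a b c : R) : 2%:R * a * (b * (2%:R^-1 * c)) = b * (a * c) by field.
rewrite big_distrr /=; under eq_bigr => h _ do rewrite big_distrr /=.
under eq_bigr => h _ do
  under eq_bigr => h' /andP[h'E _] do rewrite sum_inj_Xent_dist //.
rewrite sum_distinct_pairs_const -mulrnAr mulrA -/P [in X in _ <= X]mulr_natl /nedges.
have [->|P_neq0] := eqVneq P 0; last by rewrite mulVf // mul1r.
by rewrite invr0 !mul0r mulrn_wge0 // sumr_ge0.
Qed.

Theorem lemma31 (R : realFieldType) (N l : nat) (beta : 'I_l -> R)
  (H : 'I_l -> sgraph) (X Y : vec R N) :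
  in_cube X -> in_cube Y ->
  norm1 (grad (fcount beta H) X - grad (fcount beta H) Y)
    <= \sum_(i < l) `|beta i| * (nedges (H i) * (nedges (H i) - 1))%:R
       * norm1 (X - Y).
Proof.
move=> X01 Y01.
have fE (Z : vec R N) :
    fcount beta H Z = \sum_(i < l) (N * (N - 1))%:R * beta i * tdens (H i) Z.
  by rewrite /fcount big_distrr /=; apply: eq_bigr => i _; rewrite mulrA.
apply: le_trans (norm1_grad_sub_lincomb_le X Y fE) _; apply: ler_sum => i _.
rewrite normrM normr_nat -!mulrA mulrCA ler_wpM2l //.
exact: tdens_grad_lipschitz.
Qed.
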